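(* Let $A\subset\mathbb N$ be a finite alphabet, $x\in A^{\mathbb N}$ any infinite word, and $w$ a finite word with $l(w)>\max A$. Let $\sigma_w$ be the substitution sending each $i\in A$ to the prefix of $w$ of length $l(w)-i$, and let $\int_w x=\sigma_w(x_0)\sigma_w(x_1)\sigma_w(x_2)\cdots$. If for every $n\in A$ the word $w$ is a prefix of $\sigma_w(n)\,w$, then $\int_w x$ is quasiperiodic with $w$ as a quasiperiod. In particular this holds whenever $A\subset\{0,\dots,k\}$ and $w=a^kba^k$ for letters $a\neq b$. *)

From mathcomp Require Import all_boot.
Set Implicit Arguments. Unset Strict Implicit. Unset Printing Implicit Defensive.

(* Infinite words over T are functions nat -> T; finite words are seq T. *)

Definition sigmaw {T : Type} (w : seq T) (i : nat) : seq T := take (size w - i) w.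

(* When every block is
   nonempty (i.e. x_k < size w), the first n+1 blocks have total length
   >= n+1, so position n is read inside this finite prefix and the default
   letter d is never used. *)
Definition intw {T : Type} (d : T) (w : seq T) (x : nat -> nat) (n : nat) : T :=
  nth d (flatten [seq sigmaw w (x k) | k <- iota 0 n.+1]) n.

Definition factor {T : Type} (y : nat -> T) (j m : nat) : seq T :=
  [seq y (j + k) | k <- iota 0 m].

Definition quasiperiod {T : eqType} (y : nat -> T) (q : seq T) : Prop :=
  forall i, exists j, j <= i < j + size q /\ factor y j (size q) = q.

(* Since w is a prefix of
   sigma_w(n) w for every letter n, an induction on the number of blocks shows
   that w is a prefix of sigma_w(x_k) ... sigma_w(x_(k+m-1)) w for all k, m; as
   blocks are nonempty, taking m = l(w) puts an occurrence of w at the start of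
   every block.  Every position lies in some block, which is no longer than w,
   so it is covered by the occurrence starting there.  For w = a^k b a^k and
   n <= k, sigma_w(n) w = a^k b a^(2k-n) b a^k starts with w. *)
From mathcomp Require Import all_boot zify.
Set Implicit Arguments.
Unset Strict Implicit.

Section IntegralQuasiperiod.
Variables (T : eqType) (d : T) (w : seq T) (x : nat -> nat).
Hypothesis x_lt_size : forall n, x n < size w.
Hypothesis prefix_sigmaw : forall n, prefix w (sigmaw w (x n) ++ w).

Let block k := sigmaw w (x k).
Let blocks_from k m := flatten [seq block i | i <- iota k m].
Let blocks n := blocks_from 0 n.

Lemma size_block k : 0 < size (block k) <= size w.
Proof. by rewrite /block /sigmaw size_takel ?leq_subr // subn_gt0 x_lt_size /=. Qed.

Lemma blocks_fromS k m : blocks_from k m.+1 = block k ++ blocks_from k.+1 m.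
Proof. by []. Qed.

Lemma blocksD n m : blocks (n + m) = blocks n ++ blocks_from n m.
Proof. by rewrite /blocks /blocks_from iotaD map_cat flatten_cat. Qed.

Lemma blocksS n : blocks n.+1 = blocks n ++ block n.
Proof. by rewrite -addn1 blocksD /blocks_from /= cats0. Qed.

Lemma size_blocks_from k m : m <= size (blocks_from k m).
Proof.
elim: m k => // m IHm k.
by rewrite blocks_fromS size_cat; have := size_block k; have := IHm k.+1; lia.
Qed.

Lemma prefix_blocks_from k m : prefix w (blocks_from k m ++ w).
Proof.
elim: m k => [|m IHm] k; first exact: prefix_refl.
rewrite blocks_fromS -catA; apply: prefix_trans (prefix_sigmaw k) _.
by rewrite prefix_catr // eqxx IHm.
Qed.

Lemma intwE n i : i < size (blocks n) -> intw d w x i = nth d (blocks n) i.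
Proof.
have i_lt : i < size (blocks i.+1) by have := size_blocks_from 0 i.+1.
rewrite /intw -/(blocks_from 0 i.+1) -/(blocks i.+1) => lt_i_n.
have [le_n_i1 | lt_i1_n] := leqP n i.+1.
- by rewrite -(subnKC le_n_i1) blocksD nth_cat lt_i_n.
- by rewrite -(subnKC (ltnW lt_i1_n)) blocksD nth_cat i_lt.
Qed.

Lemma factor_intw n j m : j + m <= size (blocks n) ->
  factor (intw d w x) j m = take m (drop j (blocks n)).
Proof.
move=> le_jm; rewrite -(map_nth_iota d); last by lia.
rewrite /factor -{2}[j]addn0 iotaDl -map_comp.
by apply/eq_in_map => i; rewrite mem_iota /= => lt_i; rewrite (@intwE n) //; lia.
Qed.

Lemma factor_intw_block_start k :
  factor (intw d w x) (size (blocks k)) (size w) = w.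
Proof.
have long_tail := size_blocks_from k (size w).
rewrite (factor_intw (n := k + size w)); last by rewrite blocksD size_cat leq_add2l.
rewrite blocksD drop_cat ltnn subnn drop0.
have /prefixP [t w_prefix] := prefix_blocks_from k (size w).
by rewrite -(takel_cat w long_tail) w_prefix takel_cat // take_size.
Qed.

Lemma exists_block_cover i : exists k, size (blocks k) <= i < size (blocks k.+1).
Proof.
have [n] : exists n, i < size (blocks n).
  by exists i.+1; have := size_blocks_from 0 i.+1.
elim: n => // n IHn lt_i_n.
have [/IHn // | le_n_i] := ltnP i (size (blocks n)).
by exists n; rewrite le_n_i.
Qed.

Lemma quasiperiod_intw : quasiperiod (intw d w x) w.
Proof.
move=> i; have [k /andP [le_ki lt_ik]] := exists_block_cover i.
exists (size (blocks k)); split; last exact: factor_intw_block_start.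
rewrite le_ki (leq_trans lt_ik) //= blocksS size_cat leq_add2l.
by have /andP [] := size_block k.
Qed.

End IntegralQuasiperiod.

Lemma prefix_sigmaw_aba (T : eqType) (k n : nat) (a b : T) (w : seq T) :
  w = nseq k a ++ b :: nseq k a -> n <= k -> prefix w (sigmaw w n ++ w).
Proof.
move=> -> le_nk; rewrite /sigmaw size_cat /= size_nseq.
have -> : k + k.+1 - n = k + (k - n).+1 by lia.
rewrite take_cat size_nseq ltnNge leq_addr /= addKn /= take_nseq; last by lia.
rewrite -catA /= catA -nseqD.
have -> : k - n + k = k + (k - n) by lia.
by rewrite nseqD -catA -cat_cons catA prefix_prefix.
Qed.

Theorem mainTheorem2 :
  (forall (T : eqType) (d : T) (A : seq nat) (w : seq T) (x : nat -> nat),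
     (forall n, x n \in A) ->
     (forall i, i \in A -> i < size w) ->
     (forall n, n \in A -> prefix w (sigmaw w n ++ w)) ->
     quasiperiod (intw d w x) w)
  /\
  (forall (T : eqType) (d : T) (A : seq nat) (k : nat) (a b : T) (x : nat -> nat),
     (forall i, i \in A -> i <= k) ->
     a != b ->
     (forall n, x n \in A) ->
     let w := nseq k a ++ b :: nseq k a in
     quasiperiod (intw d w x) w).
Proof.
split=> [T d A w x xA lt_A pre_A | T d A k a b x le_A _ xA w].
  by apply: quasiperiod_intw => n; [apply: lt_A | apply: pre_A].
apply: quasiperiod_intw => n; last exact: prefix_sigmaw_aba erefl (le_A _ (xA n)).
by rewrite /w size_cat /= !size_nseq; have := le_A _ (xA n); lia.
Qed.
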